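(* Let $(k_i)_{i\in\mathbb N}\subset\mathbb N$ be the coding sequence of an interval translation map of infinite type. Then the $S$-adic subshift $(X,\sigma)$ based on the substitutions $(\chi_{k_i})_{i\in\mathbb N}$ is primitive, combinatorially recognizable and aperiodic.
   Context: Coding sequences of infinite-type maps in the family $T_{\alpha,\beta}(x)=x+\alpha$ on $[0,1-\alpha)$, $x+\beta$ on $[1-\alpha,1-\beta)$, $x-1+\beta$ on $[1-\beta,1]$ ($0<\beta\le\alpha\le1$) are exactly the sequences $(k_i)$ in $\mathbb N=\{1,2,\dots\}$ with $k_{2i}>1$ for infinitely many $i$ and $k_{2i-1}>1$ for infinitely many $i$. For $k\in\mathbb N$, $\chi_k$ is the substitution on $\{1,2,3\}$: $1\mapsto2$, $2\mapsto31^k$, $3\mapsto31^{k-1}$. An $S$-adic subshift based on substitutions $\chi_i:\mathcal A_i\to\mathcal A_{i-1}^+$ (here all alphabets are $\{1,2,3\}$ and $\chi_i=\chi_{k_i}$) is the shift-orbit closure $X$ of the set of accumulation points of $\{\chi_1\circ\cdots\circ\chi_n(a): n\in\mathbb N, a\in\mathcal A_n\}$; for $i\ge1$ let $X_i$ denote the $S$-adic subshift based on $(\chi_j)_{j\ge i}$. It is primitive if for every $m$ there is $n\ge m$ such that for all $a\in\mathcal A_n$ the word $\chi_m\circ\cdots\circ\chi_n(a)$ contains every letter of $\mathcal A_{m-1}$. A substitution $\chi$, relative to a subshift $Y$, is combinatorially recognizable if there is $N$ such that for every word $w$ occurring in $Y$ with $|w|\ge N$ and every word $v=v_1\cdots v_n$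 such that $w$ occurs twice in $\chi(v)$, the first occurrence of $w$ starts at a position of the form $|\chi(v_1\cdots v_i)|$ (some $0\le i<n$) if and only if the second occurrence starts at a position of the form $|\chi(v_1\cdots v_j)|$ (some $0\le j<n$). The $S$-adic subshift is combinatorially recognizable if each $\chi_i$ is combinatorially recognizable relative to $X_i$ (with $N$ allowed to depend on $i$). It is aperiodic if there is no $x\in X$ and $k\in\mathbb N$ with $\sigma^k x=x$. *)

From HB Require Import structures.
From mathcomp Require Import all_boot.
Set Implicit Arguments. Unset Strict Implicit. Unset Printing Implicit Defensive.

Inductive letter := l1 | l2 | l3.

Definition letter_eqb (a b : letter) : bool :=
  match a, b with
  | l1, l1 | l2, l2 | l3, l3 => true
  | _, _ => false
  end.

Lemma letter_eqP : Equality.axiom letter_eqb.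
Proof. by case; case; constructor. Qed.

HB.instance Definition _ := hasDecEq.Build letter letter_eqP.

Definition subst := letter -> seq letter.
Definition subst_word (s : subst) (w : seq letter) : seq letter :=
  flatten (map s w).

Definition chi (k : nat) : subst := fun a =>
  match a with
  | l1 => [:: l2]
  | l2 => l3 :: nseq k l1
  | l3 => l3 :: nseq k.-1 l1
  end.

Fixpoint block (tau : nat -> subst) (m l : nat) (w : seq letter) : seq letter :=
  match l with
  | 0 => w
  | l'.+1 => subst_word (tau m) (block tau m.+1 l' w)
  end.

(* comp_range tau m n a = tau_m o ... o tau_n (a)   (for m <= n) *)
Definition comp_range (tau : nat -> subst) (m n : nat) (a : letter) : seq letter :=
  block tau m (n.+1 - m) [:: a].

Definition sequence := nat -> letter.

Definition factor (x : sequence) (j len : nat) : seq letter :=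
  mkseq (fun t => x (j + t)) len.

(* x is an accumulation point (in A^* u A^N with the prefix topology) of
   { tau_i o ... o tau_n (a) : n >= i, a in A }. *)
Definition accumulation_point (tau : nat -> subst) (i : nat) (x : sequence) : Prop :=
  forall m, exists n a, i <= n /\ prefix (factor x 0 m) (comp_range tau i n a).

(* X_i : the shift-orbit closure (product topology) of the set of accumulation
   points; this is the S-adic subshift based on (tau_j)_{j >= i}. *)
Definition sadic_subshift (tau : nat -> subst) (i : nat) (y : sequence) : Prop :=
  forall m, exists x j, accumulation_point tau i x /\ factor y 0 m = factor x j m.

Definition occurs_in (Y : sequence -> Prop) (w : seq letter) : Prop :=
  exists y j, Y y /\ factor y j (size w) = w.

Definition occurs_at (w u : seq letter) (p : nat) : Prop :=
  p + size w <= size u /\ take (size w) (drop p u) = w.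

Definition cut_position (s : subst) (v : seq letter) (p : nat) : Prop :=
  exists i, i < size v /\ p = size (subst_word s (take i v)).

Definition comb_recognizable_rel (s : subst) (Y : sequence -> Prop) : Prop :=
  exists N, forall w, occurs_in Y w -> N <= size w ->
    forall (v : seq letter) (p q : nat),
      occurs_at w (subst_word s v) p -> occurs_at w (subst_word s v) q ->
      (cut_position s v p <-> cut_position s v q).

Definition sadic_primitive (tau : nat -> subst) : Prop :=
  forall m, 1 <= m -> exists n, m <= n /\
    forall a b : letter, b \in comp_range tau m n a.

Definition sadic_comb_recognizable (tau : nat -> subst) : Prop :=
  forall i, 1 <= i -> comb_recognizable_rel (tau i) (sadic_subshift tau i).

Definition sadic_aperiodic (tau : nat -> subst) : Prop :=
  ~ exists (x : sequence) (k : nat),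
      sadic_subshift tau 1 x /\ 0 < k /\ forall t, x (k + t) = x t.

Definition infinite_type_coding (k : nat -> nat) : Prop :=
  (forall i, 1 <= i -> 1 <= k i) /\
  (forall N, exists i, N <= i /\ 1 <= i /\ ~~ odd i /\ 1 < k i) /\
  (forall N, exists i, N <= i /\ odd i /\ 1 < k i).

From mathcomp Require Import all_boot zify.
Set Implicit Arguments. Unset Strict Implicit.

(* Every chi_k is marked: the image of a letter is one marker (a letter other
   than 1) followed by 1s.  So in chi_k(v) the cut positions are exactly the
   markers, which gives recognizability with N = 1, and for k >= 1 a factor of
   chi_k(v) that begins with a marker desubstitutes uniquely.

   Aperiodicity: if u^oo lies in X_1, every power of u is a factor of some
   chi_{k_1} o ... o chi_{k_n}(a).  Runs of 1s in chi_k(v) are bounded, so u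
   contains a marker and a rotation of u begins with one; it desubstitutes to a
   word u' whose powers are factors at the next level, with |chi_k(u')| = |u|.
   Lengths never grow and drop whenever k_i > 1, which happens infinitely often.

   Primitivity: two steps always produce a 3; a step with k > 1 turns a 3 into
   {1,3}; further steps alternate {1,3} -> {2,3} -> {1,3}, and a second step with
   k > 1 at odd distance yields all three letters, which persist.  Even and odd
   indices with k_i > 1 provide such a pair of steps. *)

Local Notation wpow u n := (flatten (nseq n u)).

Lemma subst_word_cons s a w : subst_word s (a :: w) = s a ++ subst_word s w.
Proof. by []. Qed.

Lemma subst_word_cat s w1 w2 :
  subst_word s (w1 ++ w2) = subst_word s w1 ++ subst_word s w2.
Proof. by rewrite /subst_word map_cat flatten_cat. Qed.

Lemma subst_word_wpow s w n : subst_word s (wpow w n) = wpow (subst_word s w) n.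
Proof. by elim: n => //= n IH; rewrite subst_word_cat IH. Qed.

Lemma mem_subst_word s w a b : a \in w -> b \in s a -> b \in subst_word s w.
Proof. by move=> aw bsa; apply/flattenP; exists (s a) => //; apply: map_f. Qed.

Definition marked (s : subst) :=
  forall a, exists h t, [/\ s a = h :: t, h != l1 & all (pred1 l1) t].

(* True for the empty word, whose head defaults to l2. *)
Definition begins_marker (w : seq letter) := head l2 w != l1.

Lemma begins_marker_cat u w : begins_marker u -> 0 < size u -> begins_marker (u ++ w).
Proof. by case: u. Qed.

Section Marked.
Variable s : subst.
Hypothesis s_marked : marked s.

Lemma size_marked_gt0 a : 0 < size (s a).
Proof. by have [h [t [-> _ _]]] := s_marked a. Qed.

Lemma nth_marked a j : j < size (s a) -> (nth l2 (s a) j != l1) = (j == 0).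
Proof.
have [h [t [-> h1 /allP t1]]] := s_marked a.
case: j => [|j] //= /[!ltnS] jt; exact/negbF/t1/mem_nth.
Qed.

Lemma begins_marker_subst_word w : begins_marker (subst_word s w).
Proof.
by case: w => [|a w] //; rewrite subst_word_cons; have [h [t [-> ? _]]] := s_marked a.
Qed.

Lemma size_subst_word_ge w : size w <= size (subst_word s w).
Proof.
elim: w => //= a w IH; rewrite subst_word_cons size_cat.
by have := size_marked_gt0 a; lia.
Qed.

Lemma size_subst_word_gt w :
  has (fun a => 1 < size (s a)) w -> size w < size (subst_word s w).
Proof.
elim: w => //= a w IH; rewrite subst_word_cons size_cat.
have := size_marked_gt0 a; have := size_subst_word_ge w.
by move=> + + /orP[|/IH]; lia.
Qed.

Lemma cut_positionE v p : p < size (subst_word s v) ->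
  cut_position s v p <-> nth l2 (subst_word s v) p != l1.
Proof.
elim: v p => [|a v IH] p //; rewrite subst_word_cons size_cat nth_cat => hp.
have sa0 := size_marked_gt0 a.
case: ltnP => hpa.
  rewrite nth_marked //; split=> [[[|i] [_ ep]] | /eqP->]; last by exists 0.
    by rewrite ep.
  by move: hpa; rewrite ep /= subst_word_cons size_cat; lia.
rewrite -IH; last by lia.
split=> [[[|i] [/= hi ep]] | [i [hi ep]]].
- by move: hpa; rewrite ep; lia.
- by exists i; split => //; move: ep; rewrite subst_word_cons size_cat; lia.
- by exists i.+1; split; rewrite //= subst_word_cons size_cat -ep; lia.
Qed.

Lemma subst_word_split v A C : subst_word s v = A ++ C -> begins_marker C ->
  exists v1 v2, [/\ v = v1 ++ v2, subst_word s v1 = A & subst_word s v2 = C].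
Proof.
case: C => [|c C] E; first by exists v, [::]; rewrite cats0 E cats0.
have hA : size A < size (subst_word s v) by rewrite E size_cat /= addnS ltnS leq_addr.
move=> hc; have: nth l2 (subst_word s v) (size A) != l1 by rewrite E nth_cat ltnn subnn.
rewrite -cut_positionE // => -[i [_ eA]].
exists (take i v), (drop i v); rewrite cat_take_drop.
move: E; rewrite -{1}(cat_take_drop i v) subst_word_cat => /eqP.
by rewrite eqseq_cat // => /andP [/eqP -> /eqP ->].
Qed.

Lemma run_bound K v A B m : (forall a, size (s a) <= K.+1) ->
  subst_word s v = A ++ nseq m l1 ++ B -> m <= K.
Proof.
move=> sK; elim: v A => [|a v IH] A.
  by move/(congr1 size); rewrite !size_cat size_nseq /=; lia.
rewrite subst_word_cons => E; case: (leqP (size (s a)) (size A)) => hA.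
  apply: (IH (drop (size (s a)) A)); move/eqP: E.
  rewrite -{1}(cat_take_drop (size (s a)) A) -catA eqseq_cat ?size_takel //.
  by case/andP=> _ /eqP.
rewrite leqNgt; apply/negP => Km.
(* Inside the run there is a marker: the head of s a, or the head of s v. *)
have [q [Aq qm]] : exists q, [/\ size A <= q, q < size A + m
                                & nth l2 (s a ++ subst_word s v) q != l1].
  case: A E hA => [|x A] _ /= hA.
    exists 0; rewrite nth_cat size_marked_gt0 nth_marked ?size_marked_gt0 //.
    by split=> //; lia.
  have saK := sK a; exists (size (s a)); rewrite nth_cat ltnn subnn nth0.
  by split; [lia | lia | exact: begins_marker_subst_word].
rewrite E nth_cat ltnNge Aq /= nth_cat size_nseq ltn_subLR // qm nth_nseq.
by rewrite ltn_subLR // qm.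
Qed.

Lemma size_marked_find a v :
  size (s a) = (find (predC1 l1) (behead (subst_word s (a :: v)))).+1.
Proof.
rewrite subst_word_cons; have [h [t [-> _ t1]]] := s_marked a.
rewrite /= find_cat; have /negbTE-> : ~~ has (predC1 l1) t.
  by rewrite has_predC negbK.
by case: (subst_word s v) (begins_marker_subst_word v) => [|c w] /=;
  rewrite ?addn0 // => /negbTE->; rewrite addn0.
Qed.

Lemma subst_word_inj : injective s -> injective (subst_word s).
Proof.
move=> s_inj; elim=> [|a x IH] [|b y] //.
- move/(congr1 size); rewrite subst_word_cons size_cat /=.
  by have := size_marked_gt0 b; lia.
- move/(congr1 size); rewrite subst_word_cons size_cat /=.
  by have := size_marked_gt0 a; lia.
move=> E; have sab : size (s a) = size (s b).
  by rewrite (size_marked_find a x) (size_marked_find b y) E.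
move/eqP: E; rewrite !subst_word_cons eqseq_cat //.
by case/andP=> /eqP/s_inj-> /eqP/IH->.
Qed.

Lemma subst_word_prefix v w C : injective s ->
  subst_word s v = subst_word s w ++ C -> begins_marker C -> exists r, v = w ++ r.
Proof.
move=> s_inj /subst_word_split E /E [v1 [v2 [-> /(subst_word_inj s_inj)-> _]]].
by exists v2.
Qed.

Lemma marked_comb_recognizable Y : comb_recognizable_rel s Y.
Proof.
exists 1 => w _ w1 v p q [pw Ep] [qw Eq].
have nth_occ r : r + size w <= size (subst_word s v) ->
    take (size w) (drop r (subst_word s v)) = w ->
    nth l2 (subst_word s v) r = nth l2 w 0.
  by move=> _ <-; rewrite nth_take // nth_drop addn0.
by rewrite !cut_positionE ?nth_occ //; lia.
Qed.

End Marked.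

Lemma size_wpow (u : seq letter) n : size (wpow u n) = size u * n.
Proof. by rewrite size_flatten /shape map_nseq sumn_nseq. Qed.

Lemma wpowSr (u : seq letter) n : wpow u n.+1 = wpow u n ++ u.
Proof. by rewrite -addn1 nseqD flatten_cat /= cats0. Qed.

Lemma wpow_rot (u : seq letter) r n : infix (wpow (rot r u) n) (wpow u n.+1).
Proof.
have wpowS_cat (A D : seq letter) m :
    wpow (A ++ D) m.+1 = A ++ wpow (D ++ A) m ++ D.
  have wpowS (w : seq letter) l : wpow w l.+1 = w ++ wpow w l by [].
  elim: m => [|m IH]; first by rewrite /= !cats0.
  by rewrite [wpow (A ++ D) _]wpowS IH [wpow (D ++ A) m.+1]wpowS -!catA.
by rewrite -{2}(cat_take_drop r u) wpowS_cat infix_infix.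
Qed.

Lemma factor_add (x : sequence) j a b :
  factor x j (a + b) = factor x j a ++ factor x (j + a) b.
Proof.
rewrite /factor /mkseq iotaD map_cat add0n -[a in iota a b]addn0 iotaDl -map_comp.
by congr (_ ++ _); apply: eq_map => t /=; rewrite addnA.
Qed.

Lemma factor_periodic_wpow (x : sequence) p n : (forall t, x (p + t) = x t) ->
  factor x 0 (n * p) = wpow (factor x 0 p) n.
Proof.
move=> xp; elim: n => //= n <-; rewrite mulSn factor_add; congr (_ ++ _).
by apply: eq_mkseq => t; rewrite /= xp.
Qed.

Section Language.
Variable tau : nat -> subst.

Definition in_lang i (w : seq letter) := exists l a, infix w (block tau i l [:: a]).

Definition powers_in_lang i u := forall n, in_lang i (wpow u n).

Lemma in_lang_infix i (w w' : seq letter) : in_lang i w -> infix w' w -> in_lang i w'.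
Proof. by move=> [l [a wa]] w'w; exists l, a; apply: infix_trans wa. Qed.

Lemma in_lang_desubst i (w : seq letter) : in_lang i w -> 1 < size w ->
  exists2 v, in_lang i.+1 v & infix w (subst_word (tau i) v).
Proof.
move=> [[|l] [a wa]] w2; first by exfalso; have := size_infix wa; rewrite /=; lia.
by exists (block tau i.+1 l [:: a]) => //; exists l, a; apply: infix_refl.
Qed.

Lemma subshift_in_lang i y m : sadic_subshift tau i y -> in_lang i (factor y 0 m).
Proof.
move=> /(_ m) [x [j [acc ->]]]; have [n [a [_ pre]]] := acc (j + m).
exists (n.+1 - i), a; apply: infix_prefix_trans pre.
by rewrite factor_add suffix_infix.
Qed.

Lemma powers_in_lang_rot i u r : powers_in_lang i u -> powers_in_lang i (rot r u).
Proof. by move=> Pu n; apply: in_lang_infix (Pu n.+1) (wpow_rot u r n). Qed.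

Section Desubstitution.
Variable i : nat.
Hypothesis tau_marked : marked (tau i).

Lemma powers_has_marker u : 0 < size u -> powers_in_lang i u -> has (predC1 l1) u.
Proof.
move=> u0 Pu; apply/negPn/negP; rewrite has_predC negbK => /all_pred1P eu.
pose K := size (tau i l1) + size (tau i l2) + size (tau i l3).
have tauK a : size (tau i a) <= K.+1 by case: a; rewrite /K; lia.
have [|v _ /infixP [A [B E]]] := in_lang_desubst (Pu K.+2).
  by rewrite size_wpow; lia.
have wpow1 n : wpow u n = nseq (size u * n) l1.
  by elim: n => [|n IH]; rewrite ?muln0 //= IH {1}eu -nseqD mulnS.
by move: E; rewrite wpow1 => /(run_bound tau_marked tauK); nia.
Qed.

Hypothesis tau_inj : injective (tau i).

Lemma powers_desubst_marker u : begins_marker u -> 0 < size u ->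
  powers_in_lang i u -> exists2 u', subst_word (tau i) u' = u & powers_in_lang i.+1 u'.
Proof.
move=> mu u0 Pu.
have mu_cat w : begins_marker (u ++ w) by apply: begins_marker_cat.
have mu_pow n w : begins_marker (wpow u n.+1 ++ w) by rewrite [wpow u n.+1]/= -catA.
have Pu_split n : exists2 v, in_lang i.+1 v &
    exists A B, subst_word (tau i) v = A ++ wpow u n.+1 ++ u ++ B.
  have [|v Lv /infixP [A [B E]]] := in_lang_desubst (Pu n.+2).
    by rewrite size_wpow; nia.
  by exists v => //; exists A, B; rewrite E wpowSr -!catA.
have [u' su'] : exists u', subst_word (tau i) u' = u.
  have [v _ [A [B]]] := Pu_split 0; rewrite /= cats0.
  move=> /subst_word_split-/(_ tau_marked (mu_cat _)) [_ [v2 [_ _]]].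
  move=> /subst_word_split-/(_ tau_marked (mu_cat _)) [u' [_ [_ <- _]]].
  by exists u'.
exists u' => // n; have [v Lv [A [B E]]] := Pu_split n.
have [v1 [v2 [ev _]]] := subst_word_split tau_marked E (mu_pow _ _).
rewrite -{1}su' -subst_word_wpow => /subst_word_prefix.
case/(_ tau_marked tau_inj (mu_cat _)) => r er; apply: in_lang_infix Lv _.
by rewrite ev er [wpow u' n.+1]/= -catA catA infix_infix.
Qed.

Lemma powers_desubst u : 0 < size u -> powers_in_lang i u ->
  exists u', [/\ 0 < size u', powers_in_lang i.+1 u'
               & size (subst_word (tau i) u') = size u].
Proof.
move=> u0 Pu; have hu := powers_has_marker u0 Pu.
have mr : begins_marker (rot (find (predC1 l1) u) u).
  rewrite /begins_marker /rot (drop_nth l2) -?has_find //=.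
  exact: (nth_find l2 hu).
have [|u' su' Pu'] := powers_desubst_marker mr _ (powers_in_lang_rot _ Pu).
  by rewrite size_rot.
exists u'; rewrite su' size_rot; split=> //.
by case: u' su' {Pu'} => // /(congr1 size); rewrite size_rot /=; lia.
Qed.

End Desubstitution.
End Language.

Lemma chi_marked k : marked (chi k).
Proof.
by case; [exists l2, [::] | exists l3, (nseq k l1) | exists l3, (nseq k.-1 l1)];
  rewrite ?all_pred1_nseq.
Qed.

Lemma chi_inj k : 0 < k -> injective (chi k).
Proof. by move=> k0; case; case=> //= /(congr1 size) /=; rewrite !size_nseq; lia. Qed.

Lemma has_chi_size_gt1 k w :
  1 < k -> has (predC1 l1) w -> has (fun a => 1 < size (chi k a)) w.
Proof. by move=> k1; apply: sub_has; case=> //=; rewrite size_nseq; lia. Qed.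

Lemma block_add tau j a b w :
  block tau j (a + b) w = block tau j a (block tau (j + a) b w).
Proof. by elim: a j => [|a IH] j; rewrite ?addn0 //= IH addSnnS. Qed.

Lemma odd_gap a b : a < b -> odd a != odd b -> b = a + (2 * (b - a)./2).+1.
Proof.
move=> ab; have := odd_double_half (b - a); rewrite oddB ?(ltnW ab) // -muln2.
by case: (odd a) (odd b) => [] [] //= + _; lia.
Qed.

Definition has13 (w : seq letter) := (l1 \in w) && (l3 \in w).
Definition has23 (w : seq letter) := (l2 \in w) && (l3 \in w).
Definition has123 (w : seq letter) := [&& l1 \in w, l2 \in w & l3 \in w].

Lemma has13_chi k w : 1 < k -> l3 \in w -> has13 (subst_word (chi k) w).
Proof.
move=> k1 w3; apply/andP; split; apply: (mem_subst_word w3) => //=.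
by rewrite in_cons mem_nseq eqxx andbT; lia.
Qed.

Lemma has23_chi k w : has13 w -> has23 (subst_word (chi k) w).
Proof.
case/andP=> w1 w3; apply/andP; split.
- exact: (mem_subst_word w1).
- exact: (mem_subst_word w3).
Qed.

Lemma has13_chi23 k w : 0 < k -> has23 w -> has13 (subst_word (chi k) w).
Proof.
move=> k0 /andP [w2 w3]; apply/andP; split; apply: (mem_subst_word w2) => //=.
by rewrite in_cons mem_nseq k0.
Qed.

Lemma has123_chi k w : 1 < k -> has13 w -> has123 (subst_word (chi k) w).
Proof.
move=> k1 /andP [w1 w3]; apply/and3P; split.
- by apply: (mem_subst_word w3); rewrite /= in_cons mem_nseq eqxx andbT; lia.
- exact: (mem_subst_word w1).
- exact: (mem_subst_word w3).
Qed.

Lemma has123_chi123 k w : 0 < k -> has123 w -> has123 (subst_word (chi k) w).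
Proof.
move=> k0 /and3P [w1 w2 w3]; apply/and3P; split.
- by apply: (mem_subst_word w2); rewrite /= in_cons mem_nseq k0.
- exact: (mem_subst_word w1).
- exact: (mem_subst_word w3).
Qed.

Section ChiSadic.
Variable k : nat -> nat.
Hypothesis k_pos : forall i, 1 <= i -> 0 < k i.
Local Notation tau := (fun i => chi (k i)).

Lemma chi_powers_shrink d i u : 1 <= i -> 1 < k (i + d) -> 0 < size u ->
  powers_in_lang tau i u ->
  exists u', [/\ 0 < size u', powers_in_lang tau (i + d).+1 u' & size u' < size u].
Proof.
elim: d i u => [|d IH] i u i1 kd u0 Pu;
  have [u1 [u10 Pu1 <-]] :=
    @powers_desubst tau i (chi_marked _) (chi_inj (k_pos i1)) u u0 Pu.
  exists u1; rewrite addn0 in kd *; split=> //.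
  apply/size_subst_word_gt/has_chi_size_gt1 => //; first exact: chi_marked.
  exact: (@powers_has_marker tau i.+1 (chi_marked _) u1 u10 Pu1).
have [|u' [u'0 Pu' u'u1]] := IH i.+1 u1 (ltnW i1) _ u10 Pu1; first by rewrite addSnnS.
exists u'; rewrite -addSnnS; split=> //.
exact: leq_trans u'u1 (size_subst_word_ge (chi_marked _) _).
Qed.

Hypothesis k_gt1_inf : forall N, exists i, N <= i /\ 1 < k i.

Lemma chi_no_periodic_powers i u : 1 <= i -> 0 < size u -> ~ powers_in_lang tau i u.
Proof.
have [m lt_um] := ubnP (size u); elim: m u i lt_um => // m IH u i lt_um i1 u0 Pu.
have [j [ij kj]] := k_gt1_inf i.
have [|u' [u'0 Pu' u'u]] := @chi_powers_shrink (j - i) i u i1 _ u0 Pu.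
  by rewrite subnKC.
by apply: IH Pu' => //; lia.
Qed.

Lemma chi_sadic_aperiodic : sadic_aperiodic tau.
Proof.
move=> [x [p [Xx [p0 xp]]]].
apply: (@chi_no_periodic_powers 1 (factor x 0 p)) => //; first by rewrite size_mkseq.
by move=> n; rewrite -factor_periodic_wpow //; apply: subshift_in_lang.
Qed.

Lemma l3_in_block2 j a : l3 \in block tau j 2 [:: a].
Proof.
apply: (@mem_subst_word _ _ (if a is l1 then l2 else l3)); last by case: a.
by case: a; rewrite /= ?in_cons eqxx.
Qed.

Lemma has13_block_even j d w : 1 <= j -> has13 w -> has13 (block tau j (2 * d) w).
Proof.
elim: d j => [|d IH] j j1 w13; first by rewrite muln0.
rewrite mulnS block_add /=; apply/has13_chi23/has23_chi/IH => //; [exact: k_pos | lia].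
Qed.

Lemma has123_block j l w : 1 <= j -> has123 w -> has123 (block tau j l w).
Proof.
elim: l j => [|l IH] j j1 w123 //=.
by apply/has123_chi123/IH => //; exact: k_pos.
Qed.

Lemma has123_comp_range m s d a : 1 <= m -> m <= s -> 1 < k s ->
  1 < k (s + (2 * d).+1) -> has123 (comp_range tau m (s + (2 * d).+3) a).
Proof.
move=> m1 ms ks kr; rewrite /comp_range.
have -> : (s + (2 * d).+3).+1 - m = (s - m) + (1 + (2 * d + (1 + 2))) by lia.
rewrite (block_add _ _ (s - m)) subnKC // (block_add _ _ 1) (block_add _ _ (2 * d)).
apply: has123_block => //; apply: has123_chi ks _.
apply: has13_block_even; first lia.
apply: has13_chi; first by rewrite addn1 addSn -addnS.
exact: l3_in_block2.
Qed.

Lemma chi_sadic_primitive :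
  (forall N, exists i, N <= i /\ 1 <= i /\ ~~ odd i /\ 1 < k i) ->
  (forall N, exists i, N <= i /\ odd i /\ 1 < k i) ->
  sadic_primitive tau.
Proof.
move=> k_even k_odd m m1.
have [s [d [ms ks kr]]] : exists s d, [/\ m <= s, 1 < k s & 1 < k (s + (2 * d).+1)].
  have [q [mq [_ [qe kq]]]] := k_even m; have [p [mp [po kp]]] := k_odd m.
  case: (ltngtP p q) => [pq | qp | epq]; last by move: qe; rewrite -epq po.
  - by exists p, (q - p)./2; rewrite -odd_gap // po (negPf qe).
  - by exists q, (p - q)./2; rewrite -odd_gap // po (negPf qe).
exists (s + (2 * d).+3); split; first lia.
by move=> a b; case/and3P: (has123_comp_range a m1 ms ks kr); case: b.
Qed.

End ChiSadic.

Theorem proposition2p3 (k : nat -> nat) :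
  infinite_type_coding k ->
  sadic_primitive (fun i => chi (k i)) /\
  sadic_comb_recognizable (fun i => chi (k i)) /\
  sadic_aperiodic (fun i => chi (k i)).
Proof.
move=> [k_pos [k_even k_odd]].
have k_gt1_inf N : exists i, N <= i /\ 1 < k i.
  by have [i [Ni [_ [_ ki]]]] := k_even N; exists i.
split; [|split].
- exact: chi_sadic_primitive.
- by move=> i _; apply/marked_comb_recognizable/chi_marked.
- exact: chi_sadic_aperiodic.
Qed.
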